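(* Let $Z$ be a random variable that is moment bounded with parameter $L>0$, let $k\ge1$ be an integer, $S\subseteq[k]$ a nonempty set, and $d_t$ a positive integer for each $t\in S$. Let $D=\sum_{t\in S}td_t$ and $d=\sum_{t\in S}d_t$. Then $$\left|\mathbb E\Big[\prod_{t\in S}(Z^t)^{d_t}\Big]\right|\le\min_{t\in S}\left\{\frac{L^{D-t}\,D!\,\mathbb E[|Z|^t]}{t!}\right\}$$ and $$\left|\mathbb E\Big[\prod_{t\in S}\big(Z^t-\mathbb E[Z^t]\big)^{d_t}\Big]\right|\le\min_{t\in S}\left\{\frac{2^dL^{D-t}\,D!\,\mathbb E[|Z|^t]}{t!}\right\}.$$
   Context: A random variable $Z$ is moment bounded with parameter $L>0$ if for every integer $i\ge1$, $\mathbb E[|Z|^i]\le iL\,\mathbb E[|Z|^{i-1}]$. *)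

From HB Require Import structures.
From mathcomp Require Import all_boot all_order all_algebra.
From mathcomp Require Import all_classical all_reals all_analysis.
Set Implicit Arguments. Unset Strict Implicit. Unset Printing Implicit Defensive.
Import Order.TTheory GRing.Theory Num.Theory.

Local Open Scope ring_scope.
Local Open Scope ereal_scope.

Definition moment_bounded {d} {T : measurableType d} {R : realType}
  (P : probability T R) (Z : T -> R) (L : R) : Prop :=
  forall i : nat, (1 <= i)%N ->
    'E_P[fun x => (`|Z x| ^+ i)%R] <= (i%:R * L)%:E * 'E_P[fun x => (`|Z x| ^+ i.-1)%R].

From HB Require Import structures.
From mathcomp Require Import all_boot all_order all_algebra.
From mathcomp Require Import all_classical all_reals all_analysis.
From mathcomp Require Import ring lra zify measurable_realfun.
Import Order.TTheory GRing.Theory Num.Theory.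
Local Open Scope ring_scope.
Local Open Scope ereal_scope.

(* Iterating the moment bound gives E|Z|^(t+n) <= L^n (t+n)!/t! E|Z|^t; in
   particular E|Z|^n <= L^n n!.  The first product is Z^D, so it is bounded
   by E|Z|^D.  For the centered product, |Z^s - E Z^s| <= |Z|^s + E|Z|^s, and
   the product of these envelopes is expanded one factor at a time: a factor
   contributes either the power |Z|^s, raising the exponent, or the constant
   E|Z|^s <= L^s s!, and since s! n! <= (s+n)! both branches obey the same
   bound, whence one factor 2 per factor. *)

Lemma fact_mul_leq a b : (a`! * b`! <= (a + b)`!)%N.
Proof.
have := bin_fact (leq_addr b a); rewrite addKn => <-.
by rewrite leq_pmull // bin_gt0 leq_addr.
Qed.

Section nonneg_expectation.
Context {d} {T : measurableType d} {R : realType} {P : probability T R}.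

Lemma ge0_expectationD (f g : T -> R) :
  measurable_fun setT f -> measurable_fun setT g ->
  (forall x, 0 <= f x)%R -> (forall x, 0 <= g x)%R ->
  'E_P[fun x => (f x + g x)%R] = 'E_P[f] + 'E_P[g].
Proof.
move=> mf mg f0 g0; rewrite unlock; under eq_integral do rewrite EFinD.
by apply: ge0_integralD => // [x _||x _|]; rewrite ?lee_fin //;
  exact/measurable_EFinP.
Qed.

Lemma ge0_expectationZl (k : R) (f : T -> R) : (0 <= k)%R ->
  measurable_fun setT f -> (forall x, 0 <= f x)%R ->
  'E_P[fun x => (k * f x)%R] = k%:E * 'E_P[f].
Proof.
move=> k0 mf f0; rewrite unlock; under eq_integral do rewrite EFinM.
by apply: ge0_integralZl_EFin => // [x _|]; rewrite ?lee_fin //;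
  exact/measurable_EFinP.
Qed.

Lemma abse_expectation_le (f : T -> R) : measurable_fun setT f ->
  `| 'E_P[f] | <= 'E_P[fun x => `|f x|%R].
Proof. by move=> mf; rewrite unlock le_abse_integral //; exact/measurable_EFinP. Qed.

End nonneg_expectation.

Section moment_bounded.
Context {d} {T : measurableType d} {R : realType} {P : probability T R}
  (Z : {RV P >-> R}) (L : R).
Hypotheses (L_gt0 : (0 < L)%R) (Zmb : moment_bounded P Z L).

Lemma measurable_normZX n : measurable_fun setT (fun x => `|Z x| ^+ n)%R.
Proof.
apply/measurable_funX/measurableT_comp; first exact: normr_measurable.
exact: measurable_funPT.
Qed.

Lemma expectation_normX_ge0 n : 0 <= 'E_P[fun x => (`|Z x| ^+ n)%R].
Proof. by apply: expectation_ge0 => x; rewrite exprn_ge0. Qed.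

Lemma expectation_normX0 : 'E_P[fun x => (`|Z x| ^+ 0)%R] = 1.
Proof. by under eq_fun do rewrite expr0; rewrite expectation_cst. Qed.

Lemma expectation_normX_fin_num n : 'E_P[fun x => (`|Z x| ^+ n)%R] \is a fin_num.
Proof.
elim: n => [|n IH]; first by rewrite expectation_normX0.
rewrite ge0_fin_numE ?expectation_normX_ge0 //.
apply: le_lt_trans (Zmb _ (ltn0Sn n)) _.
by rewrite -(fineK IH) -EFinM ltry.
Qed.

Definition abs_moment n : R := fine 'E_P[fun x => (`|Z x| ^+ n)%R].

Lemma abs_momentE n : 'E_P[fun x => (`|Z x| ^+ n)%R] = (abs_moment n)%:E.
Proof. by rewrite fineK ?expectation_normX_fin_num. Qed.

Lemma abs_moment_ge0 n : (0 <= abs_moment n)%R.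
Proof. by rewrite -lee_fin -abs_momentE expectation_normX_ge0. Qed.

Lemma abs_moment0 : abs_moment 0 = 1%R.
Proof. by rewrite /abs_moment expectation_normX0. Qed.

Lemma abs_momentS n : (abs_moment n.+1 <= n.+1%:R * L * abs_moment n)%R.
Proof. by rewrite -lee_fin EFinM -!abs_momentE; exact: Zmb. Qed.

Lemma abs_moment_le_shift t n : (t <= n)%N ->
  (abs_moment n <= L ^+ (n - t) * n`!%:R / t`!%:R * abs_moment t)%R.
Proof.
move/subnKC <-; rewrite addKn; elim: (n - t)%N => [|m IH].
  by rewrite addn0 expr0 mul1r divff ?mul1r // pnatr_eq0 -lt0n fact_gt0.
rewrite addnS; apply: le_trans (abs_momentS _) _.
apply: le_trans (ler_wpM2l _ IH) _; first by rewrite mulr_ge0 // ltW.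
by rewrite factS natrM exprS; lra.
Qed.

Lemma abs_moment_le_fact n : (abs_moment n <= L ^+ n * n`!%:R)%R.
Proof.
have := abs_moment_le_shift 0 n (leq0n n).
by rewrite subn0 fact0 divr1 abs_moment0 mulr1.
Qed.

Lemma abs_moment_mul_le s m n :
  (abs_moment s * (L ^+ m * n`!%:R) <= L ^+ (s + m) * (s + n)`!%:R)%R.
Proof.
apply: le_trans (ler_wpM2r _ (abs_moment_le_fact s)) _.
  by rewrite mulr_ge0 ?exprn_ge0 // ltW.
have fact_le : (s`!%:R * n`!%:R <= (s + n)`!%:R :> R)%R.
  by rewrite -natrM ler_nat fact_mul_leq.
have L_ge0 : (0 <= L ^+ s * L ^+ m)%R by rewrite mulr_ge0 // exprn_ge0 // ltW.
rewrite exprD; nra.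
Qed.

Lemma abse_moment_le n : `|'E_P[fun x => (Z x ^+ n)%R]| <= (abs_moment n)%:E.
Proof.
rewrite -abs_momentE; apply: le_trans (abse_expectation_le _ _) _.
  exact/measurable_funX/measurable_funPT.
by under eq_fun do rewrite normrX.
Qed.

Lemma abs_fine_moment_le n : (`|fine 'E_P[fun x => (Z x ^+ n)%R]| <= abs_moment n)%R.
Proof.
move: (abse_moment_le n); case: ('E_P[_]) => [r| |] /=; rewrite ?lee_fin //.
all: by rewrite normr0 abs_moment_ge0.
Qed.

Definition envelope (c : nat) (l : seq nat) (x : T) : R :=
  `|Z x| ^+ c * \prod_(s <- l) (`|Z x| ^+ s + abs_moment s).

Lemma measurable_envelope c l : measurable_fun setT (envelope c l).
Proof.
apply: measurable_funM; first exact: measurable_normZX.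
apply: measurable_prod => s _.
by apply: measurable_funD; [exact: measurable_normZX | exact: measurable_cst].
Qed.

Lemma envelope_ge0 c l x : (0 <= envelope c l x)%R.
Proof.
rewrite mulr_ge0 ?exprn_ge0 // prodr_ge0 // => s _.
by rewrite addr_ge0 ?exprn_ge0 ?abs_moment_ge0.
Qed.

Lemma expectation_envelope_cons c s l :
  'E_P[envelope c (s :: l)] =
  'E_P[envelope (c + s) l] + (abs_moment s)%:E * 'E_P[envelope c l].
Proof.
have -> : envelope c (s :: l) =
    fun x => (envelope (c + s) l x + abs_moment s * envelope c l x)%R.
  by apply/funext => x; rewrite /envelope big_cons exprD; ring.
rewrite ge0_expectationD ?ge0_expectationZl ?abs_moment_ge0 //.
all: by [exact: measurable_envelope | exact: envelope_ge0
  | move=> x; rewrite mulr_ge0 ?abs_moment_ge0 ?envelope_ge0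
  | apply: measurable_funM; [exact: measurable_cst | exact: measurable_envelope]].
Qed.

Lemma expectation_envelope_le t c l : (t <= c)%N ->
  'E_P[envelope c l] <= (2 ^+ size l * L ^+ (c + \sum_(s <- l) s - t)
     * (c + \sum_(s <- l) s)`!%:R / t`!%:R * abs_moment t)%:E.
Proof.
elim: l c => [|s l IH] c tc.
  rewrite big_nil addn0 expr0 mul1r (_ : envelope c [::] = fun x => `|Z x| ^+ c)%R.
    by rewrite abs_momentE lee_fin abs_moment_le_shift.
  by apply/funext => x; rewrite /envelope big_nil mulr1.
rewrite expectation_envelope_cons big_cons /= addnA.
have le_cs := IH _ (leq_trans tc (leq_addr s c)).
apply: le_trans (leeD le_cs (lee_wpmul2l _ (IH _ tc))) _.
  by rewrite lee_fin abs_moment_ge0.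
rewrite -EFinM -EFinD lee_fin exprS.
set n := (c + \sum_(j <- l) j)%N.
have scale_le := abs_moment_mul_le s (n - t) n.
rewrite (_ : (s + (n - t) = c + s + \sum_(j <- l) j - t)%N) in scale_le; last by lia.
rewrite (_ : (s + n = c + s + \sum_(j <- l) j)%N) in scale_le; last by lia.
have weight_ge0 : (0 <= 2 ^+ size l / t`!%:R * abs_moment t)%R.
  by rewrite !mulr_ge0 ?invr_ge0 ?abs_moment_ge0.
nra.
Qed.

Lemma expectation_envelope0_le t l : t \in l ->
  'E_P[envelope 0 l] <= (2 ^+ size l * L ^+ (\sum_(s <- l) s - t)
     * (\sum_(s <- l) s)`!%:R / t`!%:R * abs_moment t)%:E.
Proof.
move=> /perm_to_rem tl.
have -> : envelope 0 l = envelope 0 (t :: rem t l).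
  by apply/funext => x; rewrite /envelope (perm_big _ tl).
rewrite (perm_size tl) (perm_big _ tl) big_cons /= addKn expectation_envelope_cons.
have le_t := expectation_envelope_le t t (rem t l) (leqnn t).
have le_0 := expectation_envelope_le 0 0 (rem t l) (leqnn 0).
apply: le_trans (leeD le_t (lee_wpmul2l _ le_0)) _.
  by rewrite lee_fin abs_moment_ge0.
rewrite -EFinM -EFinD lee_fin !add0n subn0 addKn fact0 divr1 abs_moment0 mulr1 exprS.
set n := (\sum_(j <- rem t l) j)%N.
have fact_le : (n`!%:R <= (t + n)`!%:R / t`!%:R :> R)%R.
  by rewrite ler_pdivlMr ?ltr0n ?fact_gt0 // -natrM ler_nat mulnC fact_mul_leq.
have weight_ge0 : (0 <= 2 ^+ size (rem t l) * L ^+ n * abs_moment t)%R.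
  by rewrite !mulr_ge0 ?exprn_ge0 ?abs_moment_ge0 // ltW.
nra.
Qed.

Lemma abs_centered_prod_le l x :
  (`|\prod_(s <- l) (Z x ^+ s - fine 'E_P[fun y => (Z y ^+ s)%R])|
     <= envelope 0 l x)%R.
Proof.
rewrite /envelope expr0 mul1r normr_prod; apply: ler_prod => s _.
rewrite normr_ge0 /=; apply: le_trans (ler_normB _ _) _.
by rewrite normrX lerD2l abs_fine_moment_le.
Qed.

End moment_bounded.

Section multiplicity_seq.
Context {I : finType} (A : {set I}) (m v : I -> nat).

Definition mseq := flatten [seq nseq (m i) (v i) | i <- enum A].

Lemma prod_mseq {R : comPzSemiRingType} (F : nat -> R) :
  (\prod_(i in A) F (v i) ^+ m i = \prod_(x <- mseq) F x)%R.
Proof.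
rewrite -big_enum big_flatten big_map; apply: eq_bigr => i _.
by rewrite big_nseq; elim: (m i) => //= n IH; rewrite exprS IH.
Qed.

Lemma sum_mseq (G : nat -> nat) :
  (\sum_(i in A) G (v i) * m i = \sum_(x <- mseq) G x)%N.
Proof.
rewrite -big_enum big_flatten big_map; apply: eq_bigr => i _.
by rewrite big_nseq; elim: (m i) => [|n IH]; rewrite ?muln0 //= mulnS IH.
Qed.

Lemma size_mseq : size mseq = (\sum_(i in A) m i)%N.
Proof.
by rewrite -sum1_size -(sum_mseq (fun=> 1%N)); apply: eq_bigr => i _; rewrite mul1n.
Qed.

Lemma mem_mseq i : i \in A -> (0 < m i)%N -> v i \in mseq.
Proof.
move=> iA mi0; apply/flattenP; exists (nseq (m i) (v i)).
  by apply/mapP; exists i; rewrite ?mem_enum.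
by rewrite mem_nseq mi0 eqxx.
Qed.

End multiplicity_seq.

Theorem lemma3 (d0 : measure_display) (T : measurableType d0) (R : realType)
  (P : probability T R) (Z : {RV P >-> R}) (L : R) (hL : (0 < L)%R)
  (hZ : moment_bounded P Z L)
  (k : nat) (hk : (1 <= k)%N) (S : {set 'I_k.+1})
  (hS0 : ord0 \notin S) (hSne : S != finset.set0)
  (dt : 'I_k.+1 -> nat) (hdt : forall t, t \in S -> (0 < dt t)%N) :
  let D := (\sum_(t in S) t * dt t)%N in
  let dd := (\sum_(t in S) dt t)%N in
  (forall t, t \in S ->
     `| 'E_P[fun x => (\prod_(s in S) (Z x ^+ s) ^+ dt s)%R] |
       <= (L ^+ (D - t) * (D`!)%:R / (t`!)%:R)%:E * 'E_P[fun x => (`|Z x| ^+ t)%R])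
  /\
  (forall t, t \in S ->
     `| 'E_P[fun x => (\prod_(s in S)
                 (Z x ^+ s - fine 'E_P[fun y => (Z y ^+ s)%R]) ^+ dt s)%R] |
       <= (2 ^+ dd * L ^+ (D - t) * (D`!)%:R / (t`!)%:R)%:E
            * 'E_P[fun x => (`|Z x| ^+ t)%R]).
Proof.
move=> D dd; pose l := mseq S dt val.
have Dl : D = (\sum_(s <- l) s)%N by exact: sum_mseq id.
have ddl : dd = size l by rewrite size_mseq.
have tl t : t \in S -> val t \in l by move=> tS; exact: mem_mseq (hdt t tS).
split=> t tS.
- under eq_fun do rewrite (prod_mseq S dt val (fun n => Z _ ^+ n)%R) prodrXr -Dl.
  have tD : (t <= D)%N.
    by rewrite Dl (perm_big _ (perm_to_rem (tl t tS))) big_cons leq_addr.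
  apply: le_trans (abse_moment_le _ _ hZ D) _.
  by rewrite (abs_momentE _ _ hZ) -EFinM lee_fin (abs_moment_le_shift _ _ hL hZ).
- under eq_fun do rewrite (prod_mseq S dt val
    (fun n => Z _ ^+ n - fine 'E_P[fun y => (Z y ^+ n)%R])%R) -/l.
  have mcentered : measurable_fun setT
      (fun x => \prod_(s <- l) (Z x ^+ s - fine 'E_P[fun y => (Z y ^+ s)%R]))%R.
    apply: measurable_prod => s _.
    exact/measurable_funB/measurable_cst/measurable_funX/measurable_funPT.
  have env_le := expectation_envelope0_le _ _ hL hZ _ _ (tl t tS).
  rewrite -Dl -ddl in env_le; rewrite (abs_momentE _ _ hZ) -EFinM.
  apply: le_trans (abse_expectation_le _ mcentered) (le_trans _ env_le).
  apply: expectation_le => //.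
  - by apply: measurableT_comp; [exact: normr_measurable | exact: mcentered].
  - exact: measurable_envelope.
  - exact: envelope_ge0 _ _ hZ 0%N l.
  - exact/aeW/(abs_centered_prod_le _ _ hZ).
Qed.
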